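(* Let $n\ge d$ and let $\mathcal{M}$ be a linkage $(n,d)$-matching field. Then the flip graph of $\mathcal{M}$ has exactly $\binom{n}{d+1}\cdot d$ edges.
   Context: $L=\{\ell_1,\dots,\ell_n\}$, $R=\{r_1,\dots,r_d\}$. An $(n,d)$-matching field $\mathcal{M}=(M_\sigma)$ assigns to each $d$-subset $\sigma\subseteq L$ a perfect matching $M_\sigma$ between $\sigma$ and $R$; it is linkage if for every $r_i\in R$ and every $(d+1)$-subset $\tau\subseteq L$ there exist distinct $\ell_j,\ell_{j'}\in\tau$ with $M_{\tau\setminus\{\ell_j\}}$ and $M_{\tau\setminus\{\ell_{j'}\}}$ agreeing everywhere except on the edges incident with $r_i$. The flip graph of $\mathcal{M}$ has the matchings $M_\sigma$ as nodes, two matchings being adjacent if and only if they differ in exactly one edge (i.e. agree everywhere except on the edge incident with a single right node). *)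

From mathcomp Require Import all_boot.
Set Implicit Arguments. Unset Strict Implicit. Unset Printing Implicit Defensive.

(* L = 'I_n (left nodes l_1..l_n), R = 'I_d (right nodes r_1..r_d).
   A perfect matching between sigma (a d-subset of L) and R is encoded as a
   function m : R -> L that is injective with image exactly sigma; the edge
   set of the matching is {(m r, r) | r in R}. *)

Definition is_perfect_matching (n d : nat) (sigma : {set 'I_n})
  (m : {ffun 'I_d -> 'I_n}) : bool :=
  injectiveb m && ([set m r | r : 'I_d] == sigma).

(* An (n,d)-matching field: a family M indexed by subsets of L, such that for
   every d-subset sigma, M sigma is a perfect matching between sigma and R
   (values of M on other subsets are irrelevant). *)
Definition matching_field (n d : nat) (M : {set 'I_n} -> {ffun 'I_d -> 'I_n}) : Prop :=
  forall sigma : {set 'I_n}, #|sigma| = d -> is_perfect_matching sigma (M sigma).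

Definition agree_except (n d : nat) (m1 m2 : {ffun 'I_d -> 'I_n}) (r : 'I_d) : bool :=
  [forall r' : 'I_d, (r' != r) ==> (m1 r' == m2 r')].

Definition linkage (n d : nat) (M : {set 'I_n} -> {ffun 'I_d -> 'I_n}) : Prop :=
  forall (r : 'I_d) (tau : {set 'I_n}), #|tau| = d.+1 ->
    exists j j' : 'I_n, [/\ j \in tau, j' \in tau, j != j' &
      agree_except (M (tau :\ j)) (M (tau :\ j')) r].

Definition differ_in_one_edge (n d : nat) (m1 m2 : {ffun 'I_d -> 'I_n}) : bool :=
  #|[set r : 'I_d | m1 r != m2 r]| == 1.

(* Edges of the flip graph: unordered pairs {sigma, sigma'} of distinct
   d-subsets of L whose matchings differ in exactly one edge.  (Distinct
   d-subsets have distinct matchings, so nodes = d-subsets.) *)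
Definition flip_edges (n d : nat) (M : {set 'I_n} -> {ffun 'I_d -> 'I_n})
  : {set {set {set 'I_n}}} :=
  [set E : {set {set 'I_n}} | [exists s1 : {set 'I_n}, exists s2 : {set 'I_n},
     [&& E == [set s1; s2], s1 != s2, #|s1| == d, #|s2| == d &
         differ_in_one_edge (M s1) (M s2)]]].

From mathcomp Require Import all_boot.
Set Implicit Arguments. Unset Strict Implicit. Unset Printing Implicit Defensive.

(* Fix a (d+1)-set t and write N_j for the matching of t :\ j.  If N_j and N_k
   agree off the right node r, then N_j r = k and N_k r = j.  Linkage provides
   such a pair {a_r, b_r} for every r.  In the graph on t with edges {a_r, b_r},
   N_j p lies in {a_p, b_p} whenever j and a_p are in the same component; for
   the root j of a component, p |-> N_j p thus maps the d edge labels of the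
   component injectively into the component minus j, which forces the graph on
   d + 1 vertices to be connected.  Hence N_j r is a_r or b_r for every j, the
   r-flip pair of t is unique, and flip edges correspond bijectively to pairs
   (t, r): the edge {s1, s2} comes from t = s1 :|: s2 and the unique r where
   the matchings of s1 and s2 differ. *)

Lemma agree_exceptC n d (m1 m2 : {ffun 'I_d -> 'I_n}) r :
  agree_except m1 m2 r = agree_except m2 m1 r.
Proof. by apply: eq_forallb => q; rewrite [m1 q == _]eq_sym. Qed.

Section PerfectMatching.

Variables (n d : nat) (s : {set 'I_n}) (m : {ffun 'I_d -> 'I_n}).
Hypothesis pm : is_perfect_matching s m.

Lemma perfect_matching_inj : injective m.
Proof. by case/andP: pm => /injectiveP. Qed.

Lemma perfect_matching_image : [set m r | r : 'I_d] = s.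
Proof. by case/andP: pm => _ /eqP. Qed.

Lemma perfect_matching_mem r : m r \in s.
Proof. by rewrite -perfect_matching_image imset_f. Qed.

Lemma perfect_matching_onto x : x \in s -> exists r, m r = x.
Proof. by rewrite -perfect_matching_image => /imsetP [r _ ->]; exists r. Qed.

End PerfectMatching.

Section TwoMatchings.

Variables (n d : nat) (s1 s2 : {set 'I_n}) (m1 m2 : {ffun 'I_d -> 'I_n}) (r : 'I_d).
Hypotheses (pm1 : is_perfect_matching s1 m1) (pm2 : is_perfect_matching s2 m2).
Hypothesis differ_r : [set q | m1 q != m2 q] = [set r].

Lemma differ_agree q : q != r -> m1 q = m2 q.
Proof.
move=> qr; apply/eqP; apply: contraNT qr => neq.
by rewrite -in_set1 -differ_r inE.
Qed.

Lemma differ_at : m1 r != m2 r.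
Proof. by have := set11 r; rewrite -differ_r inE. Qed.

Lemma flip_new_vertex : m2 r \notin s1.
Proof.
rewrite -(perfect_matching_image pm1); apply/imsetP => -[q _ eq_q].
case: (eqVneq q r) => [qr | qr].
  by move: differ_at; rewrite eq_q qr => /eqP.
move: (differ_agree qr); rewrite -eq_q => /(perfect_matching_inj pm2) rq.
by rewrite rq eqxx in qr.
Qed.

Lemma flip_setU_setD1 : (s1 :|: s2) :\ m2 r = s1.
Proof.
apply/setP => x; rewrite !inE.
have [x_s1 | x_notin_s1] := boolP (x \in s1).
  by rewrite andbT; apply: contraNneq flip_new_vertex => <-.
rewrite /=; apply/negbTE/andP => -[xr /(perfect_matching_onto pm2) [q eq_q]].
have qr : q != r by apply: contraNneq xr => <-; rewrite eq_q.
by move: x_notin_s1; rewrite -eq_q -differ_agree // perfect_matching_mem.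
Qed.

Lemma card_flip_setU : #|s1 :|: s2| = #|s1|.+1.
Proof.
by rewrite (cardsD1 (m2 r)) flip_setU_setD1 inE (perfect_matching_mem pm2) orbT.
Qed.

End TwoMatchings.

Lemma cover_setD1_pair n (t : {set 'I_n}) j k :
  j != k -> cover [set t :\ j; t :\ k] = t.
Proof.
move=> jk; apply/setP => x; apply/bigcupP/idP => [[s] | xt].
  by rewrite !inE => /orP [] /eqP -> /setD1P [].
have [xj | xj] := eqVneq x j.
  by exists (t :\ k); rewrite !inE ?eqxx ?orbT // xj jk -xj.
by exists (t :\ j); rewrite !inE ?eqxx // xj.
Qed.

Section Flips.

Variables (n d : nat) (M : {set 'I_n} -> {ffun 'I_d -> 'I_n}).
Hypothesis hM : matching_field M.
Hypothesis hL : linkage M.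

Definition flips (t : {set 'I_n}) (r : 'I_d) (j k : 'I_n) : bool :=
  [&& j \in t, k \in t, j != k & agree_except (M (t :\ j)) (M (t :\ k)) r].

Lemma flipsC t r j k : flips t r j k = flips t r k j.
Proof. by rewrite /flips andbCA eq_sym agree_exceptC. Qed.

Definition flip_edge (t : {set 'I_n}) (r : 'I_d) : {set {set 'I_n}} :=
  if [pick jk | flips t r jk.1 jk.2] is Some jk then [set t :\ jk.1; t :\ jk.2]
  else set0.

Section FlipsInSet.

Variable t : {set 'I_n}.
Hypothesis ht : #|t| = d.+1.

Local Notation N j := (M (t :\ j)).

Lemma card_setD1_succ j : j \in t -> #|t :\ j| = d.
Proof. by move=> jt; move: (cardsD1 j t); rewrite jt ht add1n => -[]. Qed.

Lemma perfect_matching_setD1 j : j \in t -> is_perfect_matching (t :\ j) (N j).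
Proof. by move=> /card_setD1_succ /hM. Qed.

Lemma flips_matching_at r j k : flips t r j k -> N j r = k.
Proof.
case/and4P => jt kt jk /forallP agree.
have [q eq_q] : exists q, N j q = k.
  by apply: (perfect_matching_onto (perfect_matching_setD1 jt)); rewrite !inE eq_sym jk.
have [// | qr] := eqVneq q r; first by rewrite -eq_q => ->.
have := perfect_matching_mem (perfect_matching_setD1 kt) q.
by rewrite -(eqP (implyP (agree q) qr)) eq_q setD11.
Qed.

Lemma flips_differ r j k : flips t r j k -> [set q | N j q != N k q] = [set r].
Proof.
move=> fl; have fl' : flips t r k j by rewrite flipsC.
apply/setP => q; rewrite !inE; have [-> | qr] := eqVneq q r.
  by rewrite (flips_matching_at fl) (flips_matching_at fl'); case/and4P: fl'.
by case/and4P: fl => _ _ _ /forallP /(_ q); rewrite qr => /eqP ->; rewrite eqxx.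
Qed.

Lemma flips_setD1_neq r j k : flips t r j k -> t :\ j != t :\ k.
Proof.
case/and4P => jt kt jk _; apply: contraNneq (negbT (setD11 k t)) => <-.
by rewrite !inE eq_sym jk.
Qed.

Section LinkageTree.

Variables a b : 'I_d -> 'I_n.
Hypothesis flips_ab : forall q, flips t q (a q) (b q).

Let flips_ba q : flips t q (b q) (a q).
Proof. by rewrite flipsC. Qed.

Definition linkage_adj : rel 'I_n := fun x y =>
  [exists q, ((a q == x) && (b q == y)) || ((a q == y) && (b q == x))].

Lemma linkage_adj_sym : symmetric linkage_adj.
Proof. by move=> x y; apply: eq_existsb => q; rewrite orbC. Qed.

Let connect_linkage_sym : connect_sym linkage_adj :=
  sym_connect_sym linkage_adj_sym.

Lemma closed_linkage_adj (A : {set 'I_n}) :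
  (forall q, (a q \in A) = (b q \in A)) -> closed linkage_adj A.
Proof. by move=> A_ab x y /existsP [q /orP [] /andP [/eqP <- /eqP <-]]. Qed.

Lemma linkage_connect_in x y : connect linkage_adj x y -> x \in t -> y \in t.
Proof.
have t_closed : closed linkage_adj t.
  by apply: closed_linkage_adj => q; case/and4P: (flips_ab q) => -> ->.
by move/(closed_connect t_closed) => ->.
Qed.

(* For w outside {a p, b p}, "N k p = w" is invariant along every edge: along
   edge q != p because N (a q) and N (b q) agree at p, and along edge p because
   it fails at both ends. *)
Lemma matching_at_component j p :
  connect linkage_adj j (a p) -> N j p \in [set a p; b p].
Proof.
move=> j_ap; apply: contraT; rewrite !inE negb_or => /andP [na nb].
have closed_w : closed linkage_adj [set k | N k p == N j p].
  apply: closed_linkage_adj => q; rewrite !inE.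
  have [-> | qp] := eqVneq q p.
    by rewrite (flips_matching_at (flips_ab p)) (flips_matching_at (flips_ba p))
               ![_ == N j p]eq_sym (negbTE na) (negbTE nb).
  by case/and4P: (flips_ab q) => _ _ _ /forallP /(_ p); rewrite eq_sym qp => /eqP ->.
move: (closed_connect closed_w j_ap); rewrite !inE eqxx.
by rewrite (flips_matching_at (flips_ab p)) eq_sym (negbTE nb).
Qed.

(* phi p := N_(root (a p)) p lies in the component of a p but is not a root,
   and phi is injective, so the d labels leave room for only one root in t. *)
Lemma linkage_connected j k : j \in t -> k \in t -> connect linkage_adj j k.
Proof.
move=> jt kt; pose rho : 'I_n -> 'I_n := root linkage_adj.
have rho_in x : x \in t -> rho x \in t by apply/linkage_connect_in/connect_root.
have a_in p : a p \in t by case/and4P: (flips_ab p).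
have b_in p : b p \in t by case/and4P: (flips_ab p).
pose phi p := N (rho (a p)) p.
have phi_edge p : phi p \in [set a p; b p].
  by apply: matching_at_component; rewrite connect_linkage_sym connect_root.
have rho_phi p : rho (phi p) = rho (a p).
  apply/(rootP connect_linkage_sym); move: (phi_edge p); rewrite !inE.
  case/orP => /eqP ->; rewrite ?connect0 // connect1 //.
  by apply/existsP; exists p; rewrite !eqxx orbT.
have phi_not_root p (x : 'I_n) : phi p != rho x.
  have pm := perfect_matching_setD1 (rho_in _ (a_in p)).
  apply: contraTneq (perfect_matching_mem pm p); rewrite -/(phi p) => eq_phi.
  by rewrite -rho_phi eq_phi /rho (root_root connect_linkage_sym) !inE eqxx.
have phi_inj : injective phi.
  move=> p p' eq_phi; have eq_rho : rho (a p) = rho (a p') by rewrite -!rho_phi eq_phi.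
  have pm := perfect_matching_setD1 (rho_in _ (a_in p')).
  by move: eq_phi; rewrite /phi eq_rho => /(perfect_matching_inj pm).
have phi_sub : [set phi p | p : 'I_d] \subset t :\ rho j :\ rho k.
  apply/subsetP => _ /imsetP [p _ ->]; rewrite !inE !phi_not_root.
  by move: (phi_edge p); rewrite !inE => /orP [] /eqP ->; rewrite ?a_in ?b_in.
apply/(rootP connect_linkage_sym)/eqP; apply: contraT => rho_jk.
move: (subset_leq_card phi_sub) ht; rewrite card_imset // card_ord.
rewrite (cardsD1 (rho j) t) (cardsD1 (rho k) (t :\ rho j)) !inE eq_sym rho_jk.
rewrite !rho_in //= !add1n.
by move=> + [eq_d]; rewrite -eq_d ltnn.
Qed.

Lemma flips_linkage_pair r j k :
  flips t r j k -> (j = a r /\ k = b r) \/ (j = b r /\ k = a r).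
Proof.
move=> fl; have fl' : flips t r k j by rewrite flipsC.
case/and4P: (fl) => jt kt jk _.
have r_at x : x \in t -> N x r \in [set a r; b r].
  move=> xt; apply/matching_at_component/linkage_connected => //.
  by case/and4P: (flips_ab r).
move: (r_at _ jt) (r_at _ kt) jk.
rewrite (flips_matching_at fl) (flips_matching_at fl') !inE.
by case/orP => /eqP ->; case/orP => /eqP ->; rewrite ?eqxx //; auto.
Qed.

End LinkageTree.

Lemma exists_flips r : exists j k, flips t r j k.
Proof. by have [j [k [jt kt jk agree]]] := hL r ht; exists j, k; apply/and4P. Qed.

Lemma flips_unique r j k j' k' :
  flips t r j k -> flips t r j' k' -> (j' = j /\ k' = k) \/ (j' = k /\ k' = j).
Proof.
have [ab flips_ab] :
    exists ab : 'I_d -> 'I_n * 'I_n, forall q, flips t q (ab q).1 (ab q).2.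
  apply: (fin_all_exists (P := fun q (jk : 'I_n * 'I_n) => flips t q jk.1 jk.2)) => q.
  by have [j0 [k0 fl]] := exists_flips q; exists (j0, k0).
move=> /(flips_linkage_pair flips_ab) [] [-> ->];
  move=> /(flips_linkage_pair flips_ab) [] [-> ->]; by [left | right].
Qed.

Lemma flip_edge_differ r j k (s s' : {set 'I_n}) :
  flips t r j k -> s \in [set t :\ j; t :\ k] -> s' \in [set t :\ j; t :\ k] ->
  s != s' -> [set q | M s q != M s' q] = [set r].
Proof.
move=> fl; rewrite !inE => /orP [] /eqP -> /orP [] /eqP ->; rewrite ?eqxx // => _.
  exact: flips_differ fl.
by rewrite -(flips_differ fl); apply/setP => q; rewrite !inE eq_sym.
Qed.

Lemma flip_edgeE r j k : flips t r j k -> flip_edge t r = [set t :\ j; t :\ k].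
Proof.
move=> fl; rewrite /flip_edge; case: pickP => [[j' k'] /= fl' | /(_ (j, k))].
  by case: (flips_unique fl fl') => -[-> ->] //; rewrite setUC.
by rewrite fl.
Qed.

Lemma flip_edge_in_flip_edges r : flip_edge t r \in flip_edges M.
Proof.
have [j [k fl]] := exists_flips r; rewrite (flip_edgeE fl) inE.
apply/existsP; exists (t :\ j); apply/existsP; exists (t :\ k).
case/and4P: (fl) => jt kt _ _.
rewrite eqxx (flips_setD1_neq fl) !card_setD1_succ //= /differ_in_one_edge.
by rewrite !eqxx; apply/cards1P; exists r; apply: flips_differ.
Qed.

End FlipsInSet.

Lemma flip_edge_of_differ (s1 s2 : {set 'I_n}) (r : 'I_d) :
  #|s1| = d -> #|s2| = d -> [set q | M s1 q != M s2 q] = [set r] ->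
  #|s1 :|: s2| = d.+1 /\ flip_edge (s1 :|: s2) r = [set s1; s2].
Proof.
move=> c1 c2 differ_r.
have differ_r' : [set q | M s2 q != M s1 q] = [set r].
  by rewrite -differ_r; apply/setP => q; rewrite !inE eq_sym.
have [pm1 pm2] := (hM c1, hM c2).
have e1 := flip_setU_setD1 pm1 pm2 differ_r.
have e2 := flip_setU_setD1 pm2 pm1 differ_r'; rewrite setUC in e2.
have ht : #|s1 :|: s2| = d.+1 by rewrite (card_flip_setU pm1 pm2 differ_r) c1.
split=> //.
have -> : [set s1; s2] = [set (s1 :|: s2) :\ M s2 r; (s1 :|: s2) :\ M s1 r].
  by rewrite e1 e2.
apply: (flip_edgeE ht).
apply/and4P; split.
- by rewrite inE (perfect_matching_mem pm2) orbT.
- by rewrite inE (perfect_matching_mem pm1).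
- apply: contraNneq (flip_new_vertex pm1 pm2 differ_r) => ->.
  exact: perfect_matching_mem pm1 r.
- by rewrite e1 e2; apply/forallP => q; apply/implyP => /(differ_agree differ_r) ->.
Qed.

Lemma flip_edge_inj :
  {in [set x : {set 'I_n} * 'I_d | #|x.1| == d.+1] &,
    injective (fun x => flip_edge x.1 x.2)}.
Proof.
move=> [t r] [t' r']; rewrite !inE /= => /eqP ht /eqP ht'.
have [j [k fl]] := exists_flips ht r; have [j' [k' fl']] := exists_flips ht' r'.
rewrite (flip_edgeE ht fl) (flip_edgeE ht' fl') => eq_edge.
have jk : j != k by case/and4P: fl.
have tt' : t = t'.
  by rewrite -(cover_setD1_pair t jk) eq_edge cover_setD1_pair //; case/and4P: fl'.
subst t'; congr (_, _).
apply: set1_inj; rewrite -(flips_differ ht fl).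
apply: (flip_edge_differ ht' fl'); last exact: flips_setD1_neq fl.
all: by rewrite -eq_edge !inE eqxx ?orbT.
Qed.

End Flips.

Theorem lemma3p38 (n d : nat) (M : {set 'I_n} -> {ffun 'I_d -> 'I_n}) :
  d <= n -> matching_field M -> linkage M ->
  #|flip_edges M| = 'C(n, d.+1) * d.
Proof.
move=> _ hM hL.
pose A := [set x : {set 'I_n} * 'I_d | #|x.1| == d.+1].
have -> : flip_edges M = [set flip_edge M x.1 x.2 | x in A].
  apply/setP => E; apply/idP/imsetP => [| [[t r] A_tr ->]].
    rewrite inE => /existsP [s1 /existsP [s2 /and5P [/eqP -> _ /eqP c1 /eqP c2]]].
    case/cards1P => r differ_r.
    have [ht <-] := flip_edge_of_differ hM hL c1 c2 differ_r.
    by exists (s1 :|: s2, r); rewrite ?inE ?ht.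
  by rewrite inE in A_tr; apply: (flip_edge_in_flip_edges hM hL (eqP A_tr)).
rewrite card_in_imset; last exact: flip_edge_inj.
have -> : A = setX [set s : {set 'I_n} | #|s| == d.+1] [set: 'I_d].
  by apply/setP => -[s q]; rewrite !inE andbT.
by rewrite cardsX card_draws cardsT !card_ord.
Qed.
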